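(* For every $n\geq1$ and every divisor $d$ of $2n$, $$\mathrm{orb}_d(n)=\begin{cases}\mathrm{orb}_1(n/d), & d \text{ odd},\\ \mathrm{orb}_2(2n/d), & d\text{ even}.\end{cases}$$
   Context: For an integer $n\geq1$ let $V_n=\{v_0,\dots,v_{n-1}\}$, indices modulo $n$. The dihedral group $D_{2n}=\{1,\sigma,\dots,\sigma^{n-1},\tau,\sigma\tau,\dots,\sigma^{n-1}\tau\}$ acts on subsets of $V_n$ elementwise, with $\sigma(v_i)=v_{i+1}$, $\tau(v_i)=v_{n-i}$. Let $\mathbf{X}_n$ be the family of subsets $X\subseteq V_n$ such that (a) there is no $i\in\mathbb{Z}_n$ with $v_i,v_{i+1}\in X$, and (b) for every $i\in\mathbb{Z}_n$ at least one of $v_i,v_{i+1},v_{i+2}$ lies in $X$ (for $n\geq3$ these are exactly the maximal independent sets of the cycle graph $C_n$ with edges $v_iv_{i+1}$). $\mathbf{X}_n$ is invariant under $D_{2n}$. For $d\mid 2n$, $\mathrm{orb}_d(n)$ denotes the number of $D_{2n}$-orbits of $\mathbf{X}_n$ of cardinality $2n/d$ (equivalently, whose elements have stabilizer of order $d$). *)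

From mathcomp Require Import all_boot.
Set Implicit Arguments. Unset Strict Implicit. Unset Printing Implicit Defensive.

(* Vertices v_0..v_{n-1} are 'I_n; subsets of V_n are {set 'I_n}. *)
Lemma ord_pos n (i : 'I_n) : 0 < n.
Proof. by case: i => m /= /(leq_ltn_trans (leq0n m)). Qed.

(* the vertex v_(j mod n) (n > 0 is witnessed by i) *)
Definition ordmod n (i : 'I_n) (j : nat) : 'I_n := Ordinal (ltn_pmod j (ord_pos i)).

Definition vsucc n (i : 'I_n) : 'I_n := ordmod i i.+1.

(* The dihedral group D_(2n): the element (k, b) stands for sigma^k tau^b,
   so it has exactly 2n elements; it maps v_i to v_(k + i) if b = false and
   to v_(k - i) if b = true. *)
Definition dihedral n := ('I_n * bool)%type.

Definition dmap n (g : dihedral n) (i : 'I_n) : 'I_n :=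
  ordmod i ((if g.2 then n - i else i) + g.1).

Definition dact n (g : dihedral n) (X : {set 'I_n}) : {set 'I_n} :=
  [set dmap g i | i in X].

Definition Xfam n : {set {set 'I_n}} :=
  [set X : {set 'I_n} |
     [forall i : 'I_n, ~~ ((i \in X) && (vsucc i \in X))] &&
     [forall i : 'I_n, [|| i \in X, vsucc i \in X | vsucc (vsucc i) \in X]]].

Definition dorbit n (X : {set 'I_n}) : {set {set 'I_n}} :=
  [set dact g X | g : dihedral n].

Definition orb (d n : nat) : nat :=
  #|[set dorbit X | X in Xfam n & #|dorbit X| == (2 * n) %/ d]|.

From mathcomp Require Import all_boot zify.
Set Implicit Arguments. Unset Strict Implicit. Unset Printing Implicit Defensive.

(* Let p be the rotation period of X.  Its dihedral orbit has size p or 2p,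
   according as the reflection maps X into its rotation class or not.  If the
   orbit has size 2n/d, then p divides m = n/d (d odd) or m = 2n/d (d even),
   so X is invariant under rotation by m, i.e. X is the preimage of a subset
   of V_m under i |-> i mod m.  This lifting preserves the defining
   conditions of X_m and X_n and commutes with the dihedral actions, hence
   maps orbits bijectively onto orbits of the same size; and 2n/d equals
   2m/1, resp. 2m/2. *)

Lemma order_dvdn_iter (T : finType) (f : T -> T) x k :
  injective f -> (order f x %| k) = (iter k f x == x).
Proof.
move=> f_inj; have iter_order_mul c : iter (c * order f x) f x = x.
  by elim: c => // c IH; rewrite mulSn iterD IH iter_order.
apply/idP/eqP => [/dvdnP [c ->] // | fix_k].
have fix_mod : iter (k %% order f x) f x = x.
  transitivity (iter k f x) => //.
  by rewrite {2}(divn_eq k (order f x)) addnC iterD iter_order_mul.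
have := findex_iter (ltn_pmod k (order_gt0 f x)).
by rewrite fix_mod findex0 /dvdn => <-.
Qed.

Lemma eqn_mod_cancel n x y t :
  (x + t) %% n = 0 -> (y + t) %% n = 0 -> x %% n = y %% n.
Proof. by move=> hx hy; apply/eqP; rewrite -(eqn_modDr t) hx hy. Qed.

Section Symmetries.

Variable n : nat.
Implicit Types (X Y Z : {set 'I_n}) (a b k : nat).

Definition rot a X : {set 'I_n} := [set ordmod i (i + a) | i in X].
Definition mirror X : {set 'I_n} := [set ordmod i (n - i) | i in X].

Lemma rotD a b X : rot a (rot b X) = rot (b + a) X.
Proof.
rewrite /rot -imset_comp; apply: eq_imset => i /=; apply: val_inj => /=.
by rewrite modnDml addnA.
Qed.

Lemma rot_dvdn a X : n %| a -> rot a X = X.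
Proof.
move=> /eqP a_mod; rewrite /rot -[RHS]imset_id; apply: eq_imset => i /=.
by apply: val_inj => /=; rewrite -modnDmr a_mod addn0 modn_small.
Qed.

Lemma rot_mod a X : rot a X = rot (a %% n) X.
Proof. by apply: eq_imset => i; apply: val_inj => /=; rewrite modnDmr. Qed.

Lemma rotM a c X : rot a X = X -> rot (c * a) X = X.
Proof.
move=> fixX; elim: c => [|c IH]; first by rewrite rot_dvdn ?dvdn0.
by rewrite mulSn addnC -rotD IH fixX.
Qed.

Lemma rot_iter k X : rot k X = iter k (rot 1) X.
Proof.
elim: k => [|k IH]; first by rewrite rot_dvdn ?dvdn0.
by rewrite iterS -IH rotD addn1.
Qed.

Lemma rot1_inj : 0 < n -> injective (rot 1).
Proof.
move=> n_gt0; apply: (@can_inj _ _ _ (rot n.-1)) => X.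
by rewrite rotD add1n prednK // rot_dvdn.
Qed.

Lemma rot_fixed_dvdn k X : 0 < n -> (rot k X == X) = (order (rot 1) X %| k).
Proof. by move=> n_gt0; rewrite (order_dvdn_iter _ _ (rot1_inj n_gt0)) rot_iter. Qed.

Lemma mirrorK : involutive mirror.
Proof.
move=> X; rewrite /mirror -imset_comp -[RHS]imset_id; apply: eq_imset => i /=.
apply: val_inj => /=; have n_gt0 := ord_pos i.
rewrite -[RHS](modn_small (ltn_ord i)); apply: (@eqn_mod_cancel _ _ _ (n - i)).
  by rewrite -modnDmr subnK ?modnn // ltnW // ltn_pmod.
by rewrite subnKC ?modnn // ltnW.
Qed.

Lemma mirror_rot a b X : n %| a + b -> mirror (rot a X) = rot b (mirror X).
Proof.
move=> dvd_ab; rewrite /mirror /rot -!imset_comp; apply: eq_imset => i /=.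
apply: val_inj => /=; have n_gt0 := ord_pos i.
apply: (@eqn_mod_cancel _ _ _ (i + a)).
  by rewrite -modnDmr subnK ?modnn // ltnW // ltn_pmod.
rewrite -addnA modnDml.
have -> : n - i + (b + (i + a)) = n + (a + b) by have := ltn_ord i; lia.
by rewrite modnDl; apply/eqP.
Qed.

Lemma dactE (a : 'I_n) (b : bool) X : dact (a, b) X = rot a (if b then mirror X else X).
Proof.
case: b => //; rewrite /dact /rot /mirror -imset_comp; apply: eq_imset => i /=.
by apply: val_inj => /=; rewrite modnDml.
Qed.

Definition rot_class X : {set {set 'I_n}} := [set rot k X | k : 'I_n].

Lemma dorbitE X : dorbit X = rot_class X :|: rot_class (mirror X).
Proof.
apply/setP => Z; rewrite inE; apply/imsetP/orP.
  by case=> [[a b]] _ ->; rewrite dactE; case: b; [right | left]; apply/imsetP; exists a.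
by case=> /imsetP [a _ ->]; [exists (a, false) | exists (a, true); rewrite // dactE].
Qed.

Hypothesis n_gt0 : 0 < n.

Lemma mem_rot_class X Z : (Z \in rot_class X) = fconnect (rot 1) X Z.
Proof.
apply/imsetP/idP => [[k _ ->] | /iter_findex <-].
  by rewrite rot_iter; apply: fconnect_iter.
rewrite -rot_iter rot_mod.
by exists (Ordinal (ltn_pmod (findex (rot 1) X Z) n_gt0)).
Qed.

Lemma card_rot_class X : #|rot_class X| = order (rot 1) X.
Proof. by apply: eq_card => Z; rewrite mem_rot_class. Qed.

Lemma rot_class_mirror X : rot_class (mirror X) = mirror @: rot_class X.
Proof.
apply/setP => Z; apply/imsetP/imsetP => [[k _ ->] | [W /imsetP [k _ ->] ->]].
  exists (rot ((n - k) %% n) X); first by apply/imsetP; exists (Ordinal (ltn_pmod (n - k) n_gt0)).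
  by rewrite -rot_mod (mirror_rot (b := k)) // subnK // ltnW.
exists (Ordinal (ltn_pmod (n - k) n_gt0)) => //=.
by rewrite -rot_mod (mirror_rot (b := n - k)) // subnKC // ltnW.
Qed.

Lemma card_dorbit X :
  #|dorbit X| = order (rot 1) X \/ #|dorbit X| = 2 * order (rot 1) X.
Proof.
have conn_sym := fconnect_sym (rot1_inj n_gt0).
have card_mirror : #|rot_class (mirror X)| = #|rot_class X|.
  by rewrite rot_class_mirror card_imset //; apply: (can_inj mirrorK).
case: (boolP (fconnect (rot 1) X (mirror X))) => [conn | not_conn].
  have same_class : rot_class (mirror X) = rot_class X.
    by apply/setP => Z; rewrite !mem_rot_class (same_connect conn_sym conn).
  by left; rewrite dorbitE same_class setUid card_rot_class.
right; have disj : rot_class X :&: rot_class (mirror X) = set0.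
  apply/setP => Z; rewrite !inE !mem_rot_class; apply/negP => /andP [h1 h2].
  by case/negP: not_conn; apply: connect_trans h1 _; rewrite conn_sym.
have := cardsUI (rot_class X) (rot_class (mirror X)).
by rewrite -dorbitE disj cards0 addn0 card_mirror card_rot_class mul2n addnn.
Qed.

End Symmetries.

Definition orbits_of_size n k : {set {set {set 'I_n}}} :=
  [set dorbit X | X in Xfam n & #|dorbit X| == k].

Section PeriodicLift.

Variables m n : nat.
Hypotheses (m_gt0 : 0 < m) (n_gt0 : 0 < n) (m_dvd_n : m %| n).
Let m_le_n : m <= n := dvdn_leq n_gt0 m_dvd_n.

Definition modm (i : 'I_n) : 'I_m := Ordinal (ltn_pmod i m_gt0).

Definition lift_set (Y : {set 'I_m}) : {set 'I_n} := [set i | modm i \in Y].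

Definition restrict_set (X : {set 'I_n}) : {set 'I_m} :=
  [set j | widen_ord m_le_n j \in X].

Lemma modm_succ i : modm (vsucc i) = vsucc (modm i).
Proof.
apply: val_inj => /=; rewrite (modn_dvdm _ m_dvd_n).
by rewrite -[i.+1]addn1 -[(i %% m).+1]addn1 modnDml.
Qed.

Lemma modm_widen j : modm (widen_ord m_le_n j) = j.
Proof. by apply: val_inj => /=; rewrite modn_small. Qed.

Lemma forall_modm (P : pred 'I_m) : [forall i, P (modm i)] = [forall j, P j].
Proof.
apply/forallP/forallP => P_all j //.
by have := P_all (widen_ord m_le_n j); rewrite modm_widen.
Qed.

Lemma lift_setK : cancel lift_set restrict_set.
Proof. by move=> Y; apply/setP => j; rewrite !inE modm_widen. Qed.

Lemma lift_set_Xfam Y : (lift_set Y \in Xfam n) = (Y \in Xfam m).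
Proof.
rewrite !inE; congr (_ && _); rewrite -forall_modm.
  by apply: eq_forallb => i; rewrite !inE modm_succ.
by apply: eq_forallb => i; rewrite !inE !modm_succ.
Qed.

Lemma rot_lift_subset a Y : rot a (lift_set Y) \subset lift_set (rot a Y).
Proof.
apply/subsetP => x /imsetP [i]; rewrite inE => Yi ->; rewrite inE.
apply/imsetP; exists (modm i) => //; apply: val_inj => /=.
by rewrite (modn_dvdm _ m_dvd_n) modnDml.
Qed.


Lemma rot_lift a Y : rot a (lift_set Y) = lift_set (rot a Y).
Proof.
have rotK k (Z : {set 'I_k}) : k %| n -> rot (n.-1 * a) (rot a Z) = Z.
  by move=> k_dvd_n; rewrite rotD -mulSn prednK // rot_dvdn // dvdn_mulr.
have rotKV k (Z : {set 'I_k}) : k %| n -> rot a (rot (n.-1 * a) Z) = Z.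
  by move=> k_dvd_n; rewrite rotD -mulSnr prednK // rot_dvdn // dvdn_mulr.
apply/eqP; rewrite eqEsubset rot_lift_subset /=.
rewrite -{1}(rotKV _ (lift_set (rot a Y)) (dvdnn n)); apply: imsetS.
by apply: subset_trans (rot_lift_subset _ _) _; rewrite rotK.
Qed.

Lemma mirror_lift_subset Y : mirror (lift_set Y) \subset lift_set (mirror Y).
Proof.
apply/subsetP => x /imsetP [i]; rewrite inE => Yi ->; rewrite inE.
apply/imsetP; exists (modm i) => //; apply: val_inj => /=.
rewrite (modn_dvdm _ m_dvd_n); apply: (@eqn_mod_cancel _ _ _ i).
  by rewrite subnK ?(ltnW (ltn_ord i)) //; apply/eqP.
by rewrite -modnDmr subnK ?modnn // ltnW // ltn_pmod.
Qed.

Lemma mirror_lift Y : mirror (lift_set Y) = lift_set (mirror Y).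
Proof.
apply/eqP; rewrite eqEsubset mirror_lift_subset /=.
rewrite -{1}(mirrorK (lift_set (mirror Y))); apply: imsetS.
by apply: subset_trans (mirror_lift_subset _) _; rewrite mirrorK.
Qed.

Lemma dact_lift (a : 'I_n) b Y : dact (a, b) (lift_set Y) = lift_set (dact (modm a, b) Y).
Proof.
rewrite !dactE /= -rot_mod -rot_lift.
by case: b; rewrite ?mirror_lift.
Qed.

Lemma dorbit_lift Y : dorbit (lift_set Y) = lift_set @: dorbit Y.
Proof.
apply/setP => Z; apply/imsetP/imsetP => [[[a b] _ ->] | [W /imsetP [[a b] _ ->] ->]].
  by exists (dact (modm a, b) Y); rewrite ?dact_lift //; apply: imset_f.
by exists (widen_ord m_le_n a, b); rewrite // dact_lift modm_widen.
Qed.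

Lemma card_dorbit_lift Y : #|dorbit (lift_set Y)| = #|dorbit Y|.
Proof. by rewrite dorbit_lift card_imset //; apply: can_inj lift_setK. Qed.

Lemma rot_periodic_mem (X : {set 'I_n}) (i j : 'I_n) :
  rot m X = X -> i %% m = j %% m -> i \in X -> j \in X.
Proof.
move=> fixX eq_mod Xi.
have -> : j = ordmod i (i + (n %/ m - i %/ m + j %/ m) * m).
  apply: val_inj => /=; rewrite mulnDl mulnBl divnK //.
  have -> : i + (n - i %/ m * m + j %/ m * m) = j + n.
    have := divn_eq i m; have := divn_eq j m; have := leq_divM i m.
    have := ltn_ord i; move: eq_mod.
    set qi := i %/ m * m; set qj := j %/ m * m; set ri := i %% m; set rj := j %% m.
    lia.
  by rewrite modnDr modn_small.
by rewrite -(rotM (n %/ m - i %/ m + j %/ m) fixX); apply: imset_f.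
Qed.

Lemma rot_periodic_liftK X : rot m X = X -> lift_set (restrict_set X) = X.
Proof.
move=> fixX; apply/setP => i; rewrite !inE.
by apply/idP/idP; apply: rot_periodic_mem; rewrite //= modn_mod.
Qed.

Lemma orbits_of_size_lift k :
  (forall X, X \in Xfam n -> #|dorbit X| = k -> rot m X = X) ->
  orbits_of_size n k = [set lift_set @: O | O : {set {set 'I_m}} in orbits_of_size m k].
Proof.
move=> periodic; apply/setP => O; apply/imsetP/imsetP.
  case=> X; rewrite inE => /andP [Xn /eqP kX] ->.
  have liftX := rot_periodic_liftK (periodic X Xn kX).
  exists (dorbit (restrict_set X)); last by rewrite -dorbit_lift liftX.
  apply/imsetP; exists (restrict_set X) => //.
  by rewrite inE -lift_set_Xfam -card_dorbit_lift liftX Xn kX /=.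
case=> O' /imsetP [Y]; rewrite inE => /andP [Ym /eqP kY] -> ->.
exists (lift_set Y); last by rewrite dorbit_lift.
by rewrite inE lift_set_Xfam card_dorbit_lift Ym kY /=.
Qed.

Lemma card_orbits_of_size_lift k :
  (forall X, X \in Xfam n -> #|dorbit X| = k -> rot m X = X) ->
  #|orbits_of_size n k| = #|orbits_of_size m k|.
Proof.
move=> periodic; rewrite orbits_of_size_lift // card_imset //.
exact/imset_inj/can_inj/lift_setK.
Qed.

End PeriodicLift.

Lemma dvdn_period_quotient n d p s : 0 < d -> 0 < p -> p %| n ->
  s = p \/ s = 2 * p -> s * d = 2 * n ->
  p %| (if odd d then n %/ d else (2 * n) %/ d).
Proof.
move=> d_gt0 p_gt0 /dvdnP [t ->] [-> | ->] sd.
  case: ifP => [d_odd | _]; last by rewrite -sd mulnK.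
  have d_eq : d = 2 * t.
    by apply/eqP; rewrite -(eqn_pmul2l p_gt0); apply/eqP; nia.
  by rewrite d_eq oddM in d_odd.
have -> : t = d by apply/eqP; rewrite -(eqn_pmul2l p_gt0); apply/eqP; nia.
by rewrite mulKn //; case: ifP => _; rewrite // mulnCA mulKn ?dvdn_mull.
Qed.

Theorem proposition2p4 (n d : nat) :
  0 < n -> d %| 2 * n ->
  orb d n = (if odd d then orb 1 (n %/ d) else orb 2 ((2 * n) %/ d)).
Proof.
move=> n_gt0 d_dvd.
have d_gt0 : 0 < d by apply: dvdn_gt0 d_dvd; rewrite muln_gt0 n_gt0.
have d_dvd_n : odd d -> d %| n by rewrite -coprimen2 => d_coprime; rewrite -(Gauss_dvdr _ d_coprime).
pose m := if odd d then n %/ d else (2 * n) %/ d.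
have m_dvd_n : m %| n.
  rewrite /m; case: ifP => [/d_dvd_n | d_even]; first exact: dvdn_div.
  by rewrite dvdn_divLR // [n * d]mulnC dvdn_pmul2r // dvdn2 d_even.
have m_gt0 : 0 < m := dvdn_gt0 n_gt0 m_dvd_n.
have -> : (if odd d then orb 1 (n %/ d) else orb 2 ((2 * n) %/ d))
          = #|orbits_of_size m ((2 * n) %/ d)|.
  rewrite /orb /m; case: ifP => [/d_dvd_n dvd_n | _]; last by rewrite mulKn.
  by rewrite divn1 muln_divA.
apply: (card_orbits_of_size_lift m_gt0 n_gt0 m_dvd_n) => X _ orbit_size.
apply/eqP; rewrite rot_fixed_dvdn //.
apply: (dvdn_period_quotient d_gt0 (order_gt0 _ _) _ (card_dorbit n_gt0 X)).
  by rewrite -rot_fixed_dvdn // rot_dvdn.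
by rewrite orbit_size divnK.
Qed.
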